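(* Let $\mathcal F$ be a family of finite ordered graphs and let $\mathrm{Forb}^+_{T_{\mathrm{Graph}}\cup T_{\mathrm{LinOrder}}}(\mathcal F)$ be the theory of all ordered graphs that contain no non-induced copy of any member of $\mathcal F$. For the axiom-adding interpretation $I^<_{\mathcal F}\colon T_{\mathrm{Graph}}\leadsto\mathrm{Forb}^+_{T_{\mathrm{Graph}}\cup T_{\mathrm{LinOrder}}}(\mathcal F)$ (acting identically on $E$, so $I^<_{\mathcal F}(N)$ is the graph part of $N$), we have $$\chi(I^<_{\mathcal F})=\max\{\chi_<(\mathcal F),1\},$$ where $\chi_<(\mathcal F)=\inf\{\chi_<(F):F\in\mathcal F\}$ (with $\inf\varnothing=\infty$).
   Context: An ordered graph is a finite simple graph together with a strict linear order $<$ on its vertex set. An ordered graph $G$ contains a non-induced copy of an ordered graph $F$ if there is an injection $V(F)\to V(G)$ that preserves the order and maps edges to edges. A proper interval coloring of an ordered graph $G$ is a map $f\colon V(G)\to[\ell]$ that is a proper coloring of the graph (adjacent vertices get distinct colors) and whose color classes are intervals of the order (if $u<v<w$ and $f(u)=f(w)$ then $f(v)=f(u)$). The interval chromatic number $\chi_<(G)$ is the least $\ell$ admitting a proper interval coloring $f\colon V(G)\to[\ell]$. For an open interpretation $I\colon T_{\mathrm{Graph}}\leadsto T$, $\chi(I)=\sup(\{\ell\in\mathbb{N}_+:\forall n\in\mathbb{N}\ \exists N\in\mathcal M_n[T],\ T_{n,\ell}\subseteq I(N)\}\cup\{0\})+1$, where $\mathcal M_n[T]$ is the set of $n$-vertex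 models of $T$ up to isomorphism, $T_{n,\ell}$ the complete $\ell$-partite graph on $n$ vertices with parts of sizes $\lfloor n/\ell\rfloor$ or $\lceil n/\ell\rceil$, and $G\subseteq H$ means an injection mapping edges to edges. *)

From Stdlib Require Import ClassicalEpsilon.
From mathcomp Require Import all_boot.
Set Implicit Arguments. Unset Strict Implicit. Unset Printing Implicit Defensive.

Inductive enat := Fin of nat | Inf.

Definition emax (a b : enat) : enat :=
  match a, b with
  | Fin m, Fin n => Fin (maxn m n)
  | _, _ => Inf
  end.

Definition esucc (a : enat) : enat :=
  match a with Fin m => Fin m.+1 | Inf => Inf end.

Definition is_lub (S : nat -> Prop) (m : nat) : Prop :=
  (forall k, S k -> k <= m) /\ (forall m', (forall k, S k -> k <= m') -> m <= m').

Definition nat_sup (S : nat -> Prop) : enat :=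
  match excluded_middle_informative (exists m, is_lub S m) with
  | left H => Fin (proj1_sig (constructive_indefinite_description _ H))
  | right _ => Inf
  end.

Definition is_least (S : nat -> Prop) (m : nat) : Prop :=
  S m /\ (forall k, S k -> m <= k).

Definition nat_inf (S : nat -> Prop) : enat :=
  match excluded_middle_informative (exists m, is_least S m) with
  | left H => Fin (proj1_sig (constructive_indefinite_description _ H))
  | right _ => Inf
  end.

Definition is_graph (n : nat) (e : rel 'I_n) : Prop :=
  symmetric e /\ irreflexive e.

(* A finite ordered graph: vertex set 'I_ov with the natural order of 'I_ov
   (every finite ordered graph is isomorphic to one of this form). *)
Record ograph := OGraph {
  ov : nat;
  oadj : rel 'I_ov;
  ograph_sym : symmetric oadj;
  ograph_irr : irreflexive oadj
}.

Definition ocontains (n : nat) (G : rel 'I_n) (F : ograph) : Prop :=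
  exists f : 'I_(ov F) -> 'I_n,
    [/\ injective f,
        (forall x y : 'I_(ov F), x < y -> f x < f y) &
        (forall x y : 'I_(ov F), @oadj F x y -> G (f x) (f y))].

Definition gsubgraph (m n : nat) (G : rel 'I_m) (H : rel 'I_n) : Prop :=
  exists f : 'I_m -> 'I_n,
    injective f /\ (forall x y, G x y -> H (f x) (f y)).

Definition proper_interval_coloring (G : ograph) (l : nat)
    (f : 'I_(ov G) -> 'I_l) : Prop :=
  (forall u v, @oadj G u v -> f u != f v) /\
  (forall u v w : 'I_(ov G), u < v -> v < w -> f u = f w -> f v = f u).

Definition is_interval_chromatic (G : ograph) (l : nat) : Prop :=
  is_least (fun k => exists f, @proper_interval_coloring G k f) l.

Definition chi_lt_family (Fam : ograph -> Prop) : enat :=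
  nat_inf (fun l => exists G, Fam G /\ is_interval_chromatic G l).

Definition forb_model (Fam : ograph -> Prop) (n : nat) (e : rel 'I_n) : Prop :=
  is_graph e /\ (forall F, Fam F -> ~ ocontains e F).

(* T_{n,l}: complete l-partite graph on n vertices, parts = residue classes
   mod l (sizes floor(n/l) or ceil(n/l)). *)
Definition turan_graph (n l : nat) : rel 'I_n :=
  fun i j => (i %% l) != (j %% l).

Definition chi_interp (Fam : ograph -> Prop) : enat :=
  esucc (nat_sup (fun l => l = 0 \/
    (0 < l /\ forall n : nat, exists e : rel 'I_n,
        forb_model Fam e /\ gsubgraph (@turan_graph n l) e))).

(* By definition chi(I) = 1 + sup R, where R contains 0 and every l > 0 such
   that, for each n, the Turan graph T_{n,l} embeds into some Fam-free ordered
   graph on n vertices ("T_{n,l} is realizable"). We prove that for l > 0 the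
   graphs T_{n,l} are realizable iff every member of Fam has chi_< > l; the
   order-theoretic lemma [below_inf_sup] then turns 1 + sup R into
   max(inf chi_<(Fam), 1).
   - If l < chi_<(F) for all F in Fam, order T_{n,l} by residue classes so
     that its parts are intervals: a copy of F in it induces a monotone, hence
     interval, l-coloring of F, which is impossible.
   - If some F in Fam has chi_<(F) = k <= l, renumber the color blocks of an
     interval coloring of F to get a monotone coloring. In any ordered graph
     containing T_{n,l} with n = l*l*(|F|+1), a greedy scan along the order
     finds l consecutive blocks of |F|+1 vertices, each inside one part of
     T_{n,l} and in pairwise different parts; sending the i-th color class
     of F into the i-th block embeds F. *)

From Stdlib Require Import ClassicalEpsilon Classical.
From mathcomp Require Import all_boot zify.
Set Implicit Arguments. Unset Strict Implicit. Unset Printing Implicit Defensive.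

Lemma least_exists (S : nat -> Prop) : (exists k, S k) -> exists m, is_least S m.
Proof.
move=> [k Sk].
pose P (n : nat) : bool := excluded_middle_informative (S n).
have PS n : P n <-> S n by rewrite /P; case: excluded_middle_informative.
have [m /PS Sm minm] := ex_minnP (ex_intro P k (proj2 (PS k) Sk)).
by exists m; split=> // n /PS /minm.
Qed.

Lemma nat_inf_least (S : nat -> Prop) m : is_least S m -> nat_inf S = Fin m.
Proof.
move=> [Sm minm]; rewrite /nat_inf; case: excluded_middle_informative => [H|[]].
  case: constructive_indefinite_description => m' [Sm' minm'] /=.
  by congr Fin; apply/eqP; rewrite eqn_leq minm' // minm.
by exists m.
Qed.

Lemma nat_inf_empty (S : nat -> Prop) : (forall k, ~ S k) -> nat_inf S = Inf.
Proof.
move=> S0; rewrite /nat_inf; case: excluded_middle_informative => // H.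
by have [m [/S0]] := H.
Qed.

Lemma nat_sup_lub (S : nat -> Prop) m : is_lub S m -> nat_sup S = Fin m.
Proof.
move=> [ubm lubm]; rewrite /nat_sup; case: excluded_middle_informative => [H|[]].
  case: constructive_indefinite_description => m' [ubm' lubm'] /=.
  by congr Fin; apply/eqP; rewrite eqn_leq lubm' // lubm.
by exists m.
Qed.

Lemma nat_sup_unbounded (S : nat -> Prop) : (forall m, exists2 k, S k & m < k) ->
  nat_sup S = Inf.
Proof.
move=> Sunb; rewrite /nat_sup; case: excluded_middle_informative => // H.
have [m [ubm _]] := H.
by have [k /ubm km mk] := Sunb m; move: (leq_trans mk km); rewrite ltnn.
Qed.

Lemma eq_nat_sup (S S' : nat -> Prop) : (forall k, S k <-> S' k) -> nat_sup S = nat_sup S'.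
Proof.
move=> SS'; rewrite /nat_sup.
have lubE m : is_lub S m <-> is_lub S' m.
  by split=> -[ub lub]; split=> [k /SS'|m' ub']; auto; apply: lub => k /SS'; auto.
case: excluded_middle_informative => [H|nH]; case: excluded_middle_informative => [H'|nH'].
- case: constructive_indefinite_description => m lubSm.
  case: constructive_indefinite_description => m' [ubm' lubm'] /=.
  have [ubm lubm] := proj1 (lubE m) lubSm.
  by congr Fin; apply/eqP; rewrite eqn_leq lubm // lubm'.
- by case: nH'; have [m /lubE] := H; exists m.
- by case: nH; have [m /lubE] := H'; exists m.
- by [].
Qed.

Lemma below_inf_sup (T : nat -> Prop) :
  esucc (nat_sup (fun l => l = 0 \/ (0 < l /\ forall k, T k -> l < k))) =
  emax (nat_inf T) (Fin 1).
Proof.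
case: (classic (exists k, T k)) => [/least_exists [c [Tc minc]]|noT].
  rewrite (nat_inf_least (conj Tc minc)) (@nat_sup_lub _ (maxn c 1).-1) /=.
    by congr Fin; lia.
  split=> [k [->//|[_ /(_ c Tc)]]|m ubm]; first lia.
  apply: ubm; case: (leqP c 1) => c1; first by left; lia.
  by right; split=> [|k /minc]; lia.
rewrite nat_inf_empty => [|k Tk]; last by apply: noT; exists k.
rewrite nat_sup_unbounded // => m; exists m.+1 => //.
by right; split=> // k Tk; case: noT; exists k.
Qed.

Lemma interval_chromatic_le (F : ograph) l (f : 'I_(ov F) -> 'I_l) :
  proper_interval_coloring f -> exists2 k, is_interval_chromatic F k & k <= l.
Proof.
move=> fP.
have [k [colk mink]] := @least_exists (fun k => exists g, @proper_interval_coloring F k g)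
  (ex_intro _ l (ex_intro _ f fP)).
by exists k; [split | apply: mink; exists f].
Qed.

Definition monotone_coloring (F : ograph) (l : nat) (c : 'I_(ov F) -> nat) : Prop :=
  [/\ forall v, c v < l,
      forall u v : 'I_(ov F), u <= v -> c u <= c v &
      forall u v, @oadj F u v -> c u != c v].

Lemma monotone_interval_coloring (F : ograph) l (c : 'I_(ov F) -> nat) :
  monotone_coloring l c -> exists f : 'I_(ov F) -> 'I_l, proper_interval_coloring f.
Proof.
case=> cl cmono cprop; exists (fun v => Ordinal (cl v)); split=> [u v /cprop|u v w uv vw].
  by apply: contra => /eqP [->].
move=> [] cuw; apply: val_inj => /=.
by have := cmono _ _ (ltnW uv); have := cmono _ _ (ltnW vw); lia.
Qed.

(* Renumbering the color blocks of an interval coloring from left to right. *)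
Section BlockNumbering.
Variables (N l : nat) (col : nat -> nat).
Hypothesis col_lt : forall x, x < N -> col x < l.
Hypothesis col_interval :
  forall x y z, x < y -> y < z -> z < N -> col x = col z -> col y = col x.

Definition color_change (x : nat) : bool := col x != col x.+1.
Definition block_index (v : nat) : nat := count color_change (iota 0 v).

Lemma block_index_split u v : u <= v ->
  block_index v = block_index u + count color_change (iota u (v - u)).
Proof. by move=> uv; rewrite /block_index -{1}(subnKC uv) iotaD count_cat. Qed.

Lemma block_index_mono u v : u <= v -> block_index u <= block_index v.
Proof. by move=> /block_index_split ->; apply: leq_addr. Qed.

Lemma block_indexS v : block_index v.+1 = block_index v + color_change v.
Proof. by rewrite (block_index_split (leqnSn v)) subSnn /= addn0. Qed.

Lemma block_index_const u v : u <= v -> block_index u = block_index v -> col u = col v.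
Proof.
elim: v => [|v IH]; first by rewrite leqn0 => /eqP ->.
rewrite leq_eqVlt => /predU1P [-> //|]; rewrite ltnS => uv.
rewrite block_indexS; have := block_index_mono uv.
case chv: (color_change v) => /= Euv Eb; first lia.
rewrite addn0 in Eb.
by rewrite (IH uv Eb); apply/eqP/negbFE.
Qed.

Lemma block_index_separates u v : col u != col v -> block_index u != block_index v.
Proof.
wlog uv : u v / u <= v => [wlog_uv|].
  case: (leqP u v) => [|/ltnW] uv; first exact: wlog_uv.
  by rewrite eq_sym (eq_sym (block_index u)); apply: wlog_uv.
by apply: contra => /eqP /(block_index_const uv) ->.
Qed.

Lemma color_after_change_fresh u y :
  y.+1 < N -> u <= y -> color_change y -> col u != col y.+1.
Proof.
move=> yN; rewrite leq_eqVlt => /predU1P [-> //|uy] chy; apply/eqP => Eu.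
have := col_interval uy (ltnSn y) yN Eu; move: chy.
by rewrite /color_change Eu => /negP chy Ey; apply: chy; rewrite Ey.
Qed.

(* The first color and the colors entered at the change points are pairwise
   distinct, so there are fewer than [l] change points before any vertex. *)
Lemma block_index_lt v : v < N -> block_index v < l.
Proof.
move=> vN.
pose s := col 0 :: [seq col x.+1 | x <- [seq x <- iota 0 v | color_change x]].
have size_s : size s = (block_index v).+1 by rewrite /= size_map size_filter.
have chN x : x \in [seq x <- iota 0 v | color_change x] -> x.+1 < N /\ color_change x.
  by rewrite mem_filter mem_iota => /andP [chx /andP [_ xv]]; split=> //; lia.
have inj_s : {in [seq x <- iota 0 v | color_change x] &, injective (fun x => col x.+1)}.
  move=> x y /chN [xN chx] /chN [yN chy] Exy; apply/eqP; apply: contraT => xy.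
  wlog ltxy : x y xN chx yN chy Exy xy / x < y => [wlog_xy|].
    have [ltxy|ltyx|Exy'] := ltngtP x y; last by rewrite Exy' eqxx in xy.
      exact: wlog_xy xN chx yN chy Exy xy ltxy.
    by apply: (wlog_xy y x); rewrite // eq_sym.
  by move: (color_after_change_fresh yN ltxy chy); rewrite Exy eqxx.
have uniq_s : uniq s.
  rewrite /= map_inj_in_uniq // filter_uniq ?iota_uniq // andbT.
  apply/negP => /mapP [x /chN [xN chx] Ex].
  by move: (color_after_change_fresh xN (leq0n x) chx); rewrite Ex eqxx.
have sub_s : {subset s <= iota 0 l}.
  move=> k; rewrite mem_iota add0n inE => /predU1P [->|/mapP [x /chN [xN _] ->]].
    by apply: col_lt; lia.
  exact: col_lt.
by have := uniq_leq_size uniq_s sub_s; rewrite size_s size_iota.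
Qed.
End BlockNumbering.

Lemma interval_coloring_monotone (F : ograph) l (f : 'I_(ov F) -> 'I_l) :
  proper_interval_coloring f -> exists c : 'I_(ov F) -> nat, monotone_coloring l c.
Proof.
move=> [fprop fint]; set N := ov F.
pose col x := if @insub _ (fun x => x < N) 'I_N x is Some v then val (f v) else 0.
have colE (v : 'I_N) : col v = f v by rewrite /col valK.
have col_lt x : x < N -> col x < l by move=> xN; rewrite (colE (Ordinal xN)).
have col_int x y z : x < y -> y < z -> z < N -> col x = col z -> col y = col x.
  move=> xy yz zN; have [xN yN] : x < N /\ y < N by lia.
  rewrite (colE (Ordinal xN)) (colE (Ordinal yN)) (colE (Ordinal zN)) => Exz.
  by congr val; apply: (fint (Ordinal xN) (Ordinal yN) (Ordinal zN)) => //; apply: val_inj.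
exists (fun v : 'I_N => block_index col v); split=> [v|u v|u v /fprop fuv].
- exact: block_index_lt col_lt col_int _ (ltn_ord v).
- exact: block_index_mono.
- by apply: block_index_separates; rewrite !colE; apply: contra fuv => /eqP /val_inj ->.
Qed.

Definition has_member_with_chi (Fam : ograph -> Prop) (k : nat) : Prop :=
  exists G, Fam G /\ is_interval_chromatic G k.

Definition turan_realizable (Fam : ograph -> Prop) (l : nat) : Prop :=
  forall n, exists e : rel 'I_n, forb_model Fam e /\ gsubgraph (@turan_graph n l) e.

Lemma monotone_coloring_chi (Fam : ograph -> Prop) F l (c : 'I_(ov F) -> nat) :
  Fam F -> monotone_coloring l c -> exists2 k, has_member_with_chi Fam k & k <= l.
Proof.
move=> FamF /monotone_interval_coloring [f /interval_chromatic_le [k chik kl]].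
by exists k => //; exists F.
Qed.

Lemma interval_multipartite_copy n l (col : 'I_n -> nat) (F : ograph) :
  (forall x, col x < l) -> (forall x y : 'I_n, x <= y -> col x <= col y) ->
  ocontains (fun x y => col x != col y) F ->
  exists c : 'I_(ov F) -> nat, monotone_coloring l c.
Proof.
move=> col_lt col_mono [g [_ gmono gadj]]; exists (fun v => col (g v)).
split=> [v|u v|u v /gadj //]; first exact: col_lt.
by rewrite leq_eqVlt => /predU1P [/val_inj -> //|/gmono /ltnW]; apply: col_mono.
Qed.

(* Sorting the vertices of [T_{n,l}] by residue class makes its parts
   intervals: [T_{n,l}] is isomorphic to such an ordered multipartite graph. *)
Section SortedTuran.
Variables (n l : nat).
Hypothesis l_gt0 : 0 < l.

Definition residue_le (i j : nat) : bool := i %% l <= j %% l.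
Definition residue_sorted : seq nat := sort residue_le (iota 0 n).
Definition sorted_col (x : 'I_n) : nat := nth 0 residue_sorted x %% l.

Lemma residue_sorted_perm : perm_eq residue_sorted (iota 0 n).
Proof. by rewrite perm_sort. Qed.

Lemma size_residue_sorted : size residue_sorted = n.
Proof. by rewrite (perm_size residue_sorted_perm) size_iota. Qed.

Lemma mem_residue_sorted x : (x \in residue_sorted) = (x < n).
Proof. by rewrite (perm_mem residue_sorted_perm) mem_iota. Qed.

Lemma sorted_col_lt x : sorted_col x < l.
Proof. exact: ltn_pmod. Qed.

Lemma sorted_col_mono (x y : 'I_n) : x <= y -> sorted_col x <= sorted_col y.
Proof.
have le_trans : transitive residue_le by move=> ? ? ?; apply: leq_trans.
have le_refl : reflexive residue_le by move=> ?; apply: leqnn.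
have le_sorted : sorted residue_le residue_sorted.
  by apply: sort_sorted => i j; apply: leq_total.
by move=> xy; apply: (sorted_leq_nth le_trans le_refl 0 le_sorted);
  rewrite ?inE ?size_residue_sorted.
Qed.

Lemma turan_sorted :
  gsubgraph (@turan_graph n l) (fun x y => sorted_col x != sorted_col y).
Proof.
have index_lt (i : 'I_n) : index (val i) residue_sorted < n.
  by move: (ltn_ord i); rewrite -mem_residue_sorted -index_mem size_residue_sorted.
exists (fun i => Ordinal (index_lt i)); split=> [i j [] Eij|i j].
  by apply/val_inj/(index_inj 0 _ _ Eij); rewrite mem_residue_sorted.
by rewrite /sorted_col /= !nth_index ?mem_residue_sorted.
Qed.
End SortedTuran.

Lemma realizable_below_chi (Fam : ograph -> Prop) l : 0 < l ->
  (forall k, has_member_with_chi Fam k -> l < k) -> turan_realizable Fam l.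
Proof.
move=> l_gt0 chi_gt n; exists (fun x y => @sorted_col n l x != @sorted_col n l y).
split; last exact: turan_sorted.
split=> [|F FamF copyF]; first by split=> [x y|x]; rewrite ?eqxx // eq_sym.
have [c cmono] :=
  interval_multipartite_copy (sorted_col_lt l_gt0) (@sorted_col_mono n l) copyF.
have [k /chi_gt lk kl] := monotone_coloring_chi FamF cmono.
by move: (leq_trans lk kl); rewrite ltnn.
Qed.

Section GreedyBlocks.
Variables (cls : nat -> nat) (t n : nat).
Hypothesis t_gt0 : 0 < t.

Definition class_count (c p q : nat) : nat := count (fun x => cls x == c) (iota p (q - p)).

Lemma class_count_split c p q r : p <= q <= r ->
  class_count c p r = class_count c p q + class_count c q r.
Proof.
move=> /andP [pq qr]; rewrite /class_count.
have -> : r - p = (q - p) + (r - q) by lia.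
by rewrite iotaD count_cat subnKC.
Qed.

Lemma class_count_empty c p q : q <= p -> class_count c p q = 0.
Proof. by move=> qp; rewrite /class_count (_ : q - p = 0) //; lia. Qed.

Definition block_embedding (j p : nat) (K : seq nat) (g pi : nat -> nat) : Prop :=
  [/\ forall x y, x < y -> y < j * t -> g x < g y,
      forall x, x < j * t -> p <= g x < n,
      forall x, x < j * t -> cls (g x) = pi (x %/ t),
      forall i i', i < j -> i' < j -> pi i = pi i' -> i = i' &
      forall i, i < j -> pi i \in K].

Lemma first_full_class p (K : seq nat) c0 : c0 \in K -> t <= class_count c0 p n ->
  exists q c, [/\ p <= q < n, c \in K, t <= class_count c p q.+1 &
                  forall c', c' \in K -> class_count c' p q < t].
Proof.
move=> Kc0 tc0.
have pn : p < n.
  by rewrite ltnNge; apply: contraTN tc0 => /class_count_empty ->; rewrite -ltnNge.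
pose full q := has (fun c => t <= class_count c p q.+1) K.
have full_last : full n.-1 by apply/hasP; exists c0; rewrite // prednK //; lia.
have [q /hasP [c Kc tc] minq] := ex_minnP (ex_intro full _ full_last).
have qn : q < n by have := minq _ full_last; lia.
have pq : p <= q.
  by rewrite leqNgt; apply: contraTN tc => qp; rewrite class_count_empty // -ltnNge.
exists q, c; split=> // [|c' Kc']; first by rewrite pq.
have [pltq|] := ltnP p q; last by move=> qp; rewrite class_count_empty.
have : ~~ full q.-1 by apply: contraTN pltq => /minq; lia.
by move/hasPn/(_ c' Kc'); rewrite prednK -?ltnNge //; lia.
Qed.

Lemma block_embedding_cons j p q c K g' pi' :
  p <= q < n -> c \notin K -> t <= class_count c p q.+1 ->
  block_embedding j q.+1 K g' pi' ->
  exists g pi, block_embedding j.+1 p (c :: K) g pi.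
Proof.
move=> /andP [pq qn] cK tc [g'mono g'rng g'cls pi'inj pi'K].
pose S := [seq x <- iota p (q.+1 - p) | cls x == c].
have S_sorted : sorted ltn S.
  by apply: sorted_filter; [exact: ltn_trans | exact: iota_ltn_sorted].
have size_S : t <= size S by rewrite size_filter.
have S_mem x : x < t -> cls (nth 0 S x) = c /\ p <= nth 0 S x <= q.
  move=> xt; have : nth 0 S x \in S by apply: mem_nth; apply: leq_trans xt size_S.
  by rewrite mem_filter mem_iota => /andP [/eqP ? ?]; split=> //; lia.
exists (fun x => if x < t then nth 0 S x else g' (x - t)).
exists (fun i => if i is i'.+1 then pi' i' else c).
split=> [x y xy yjt|x xjt|x xjt|i i' ij i'j|[|i] ij /=].
- case: (ltnP x t) => xt; case: (ltnP y t) => yt.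
  + by apply: (sorted_ltn_nth ltn_trans 0 S_sorted); rewrite ?inE; lia.
  + by have := S_mem x xt; have := g'rng (y - t) ltac:(lia); lia.
  + lia.
  + by apply: g'mono; lia.
- case: (ltnP x t) => xt; first by have := S_mem x xt; lia.
  by have := g'rng (x - t) ltac:(lia); lia.
- case: (ltnP x t) => xt; first by rewrite divn_small //; case: (S_mem x xt).
  rewrite g'cls; last lia.
  have -> : x %/ t = ((x - t) %/ t).+1 by rewrite -{1}(subnKC xt) -{1}[t]mul1n divnMDl.
  by [].
- have pi'c k : k < j -> pi' k != c by move=> kj; apply: contraNneq cK => <-; apply: pi'K.
  case: i i' ij i'j => [|i] [|i'] //= ij i'j.
  + by move=> Ec; move: (pi'c i' i'j); rewrite Ec eqxx.
  + by move=> Ec; move: (pi'c i ij); rewrite Ec eqxx.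
  + by move=> /pi'inj ->.
- by rewrite inE eqxx.
- by rewrite inE pi'K ?orbT.
Qed.

Lemma greedy_blocks j p (K : seq nat) : uniq K -> j <= size K ->
  (forall c, c \in K -> j * t <= class_count c p n) ->
  exists g pi, block_embedding j p K g pi.
Proof.
elim: j p K => [|j IH] p K uK jK Kbig.
  by exists id, id; split=> // x; rewrite mul0n.
have [c0 Kc0] : exists c0, c0 \in K.
  by case: K jK {uK Kbig} => [//|c0 K' _]; exists c0; apply: mem_head.
have tc0 : t <= class_count c0 p n by apply: leq_trans (Kbig c0 Kc0); rewrite mulSn leq_addr.
have [q [c [pqn Kc tc smallq]]] := first_full_class Kc0 tc0.
have /andP [pq qn] := pqn.
have bigK' c' : c' \in rem c K -> j * t <= class_count c' q.+1 n.
  move=> Kc'; have {}Kc' := mem_rem Kc'.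
  have at_q : class_count c' q q.+1 <= 1 by rewrite /class_count subSnn /=; case: (_ == _).
  have split_p : class_count c' p n = class_count c' p q + class_count c' q n.
    by apply: class_count_split; rewrite pq ltnW.
  have split_q : class_count c' q n = class_count c' q q.+1 + class_count c' q.+1 n.
    by apply: class_count_split; rewrite leqnSn.
  by have := Kbig c' Kc'; have := smallq c' Kc'; rewrite mulSn; lia.
have jK' : j <= size (rem c K) by rewrite size_rem //; move: jK; case: (size K).
have [g' [pi' emb]] := IH q.+1 (rem c K) (rem_uniq c uK) jK' bigK'.
have [g [pi [gmono grng gcls piinj piK]]] :=
  block_embedding_cons pqn (negbT (mem_rem_uniqF c uK)) tc emb.
exists g, pi; split=> // i /piK; rewrite inE => /predU1P [->//|/mem_rem //].
Qed.
End GreedyBlocks.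

Lemma residue_count l m c : c < l -> count (fun i => i %% l == c) (iota 0 (l * m)) = m.
Proof.
move=> cl; elim: m => [|m IH]; first by rewrite muln0.
rewrite mulnS addnC iotaD count_cat IH add0n.
have -> : iota (l * m) l = map (addn (l * m)) (iota 0 l) by rewrite -iotaDl addn0.
rewrite count_map (eq_in_count (a2 := pred1 c)); last first.
  by move=> x; rewrite mem_iota /= => xl; rewrite mulnC modnMDl modn_small //; lia.
by rewrite count_uniq_mem ?iota_uniq // mem_iota cl addn1.
Qed.

Lemma turan_classes l m (e : rel 'I_(l * m)) :
  gsubgraph (@turan_graph (l * m) l) e ->
  exists cls : nat -> nat,
    (forall k, k < l -> class_count cls k 0 (l * m) = m) /\
    (forall a b : 'I_(l * m), cls a != cls b -> e a b).
Proof.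
move=> [h [hinj hedge]]; set n := l * m.
pose cls x := if @insub _ (fun x => x < n) 'I_n x is Some y then val (invF hinj y) %% l else l.
have clsE (y : 'I_n) : cls y = invF hinj y %% l by rewrite /cls valK.
exists cls; split=> [k kl|a b]; last first.
  by rewrite !clsE -{2}(f_invF hinj a) -{2}(f_invF hinj b) => /hedge.
have hinv_perm : perm_eq (map (invF hinj) (enum 'I_n)) (enum 'I_n).
  apply: uniq_perm.
  - by rewrite map_inj_uniq ?enum_uniq //; apply: can_inj (f_invF hinj).
  - exact: enum_uniq.
  - by move=> y; rewrite mem_enum; apply/mapP; exists (h y); rewrite ?mem_enum ?invF_f.
rewrite /class_count subn0 -(residue_count m kl) -val_enum_ord !count_map.
rewrite (eq_count (a2 := preim (invF hinj) (fun i : 'I_n => i %% l == k))); last first.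
  by move=> y /=; rewrite clsE.
by rewrite -enumT -count_map (permP hinv_perm).
Qed.

(* The
   greedy blocks give, for each color, an interval of [t] positions of one
   class; vertex [v] of color [c v] goes to position [v] of block [c v]. *)
Lemma multipartite_contains n l t (e : rel 'I_n) (cls : nat -> nat) (F : ograph)
    (c : 'I_(ov F) -> nat) :
  0 < t -> ov F <= t ->
  (forall k, k < l -> l * t <= class_count cls k 0 n) ->
  (forall a b : 'I_n, cls a != cls b -> e a b) ->
  monotone_coloring l c -> ocontains e F.
Proof.
move=> t_gt0 Ft big edges [c_lt c_mono c_prop].
have [|||g [pi [gmono grng gcls piinj piK]]] := @greedy_blocks cls t n t_gt0 l 0 (iota 0 l).
- exact: iota_uniq.
- by rewrite size_iota.
- by move=> k; rewrite mem_iota => /andP [_ /big].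
pose pos (v : 'I_(ov F)) := c v * t + v.
have vt (v : 'I_(ov F)) : v < t by apply: leq_trans (ltn_ord v) Ft.
have pos_lt v : pos v < l * t.
  by have := c_lt v; have := vt v; rewrite /pos -ltn_divLR // divnMDl // divn_small ?vt //; lia.
have pos_div v : pos v %/ t = c v by rewrite divnMDl // divn_small ?addn0.
have pos_mono (u v : 'I_(ov F)) : u < v -> pos u < pos v.
  move=> uv; have := c_mono _ _ (ltnW uv); rewrite /pos -(leq_pmul2r t_gt0); lia.
have phi_lt v : g (pos v) < n by case/andP: (grng _ (pos_lt v)).
pose phi v := Ordinal (phi_lt v).
have phi_mono (u v : 'I_(ov F)) : u < v -> phi u < phi v.
  by move=> uv; apply: gmono (pos_mono _ _ uv) (pos_lt v).
exists phi; split=> // [u v Euv|u v /c_prop cuv].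
  apply/eqP; apply: contraT => uv; have [/phi_mono|/phi_mono|/val_inj Euv'] := ltngtP u v.
  - by rewrite Euv ltnn.
  - by rewrite Euv ltnn.
  - by rewrite Euv' eqxx in uv.
apply: edges; rewrite /= !gcls ?pos_lt // !pos_div.
by apply: contra cuv => /eqP /piinj -> //; apply: c_lt.
Qed.

(* If [T_{n,l}] is realizable for all [n], no member of [Fam] has interval
   chromatic number at most [l]: for a member [F] with [k <= l], take
   [n = l * (l * (|F| + 1))]; the realizing model would contain [F]. *)
Lemma realizable_above_chi (Fam : ograph -> Prop) l :
  turan_realizable Fam l -> forall k, has_member_with_chi Fam k -> l < k.
Proof.
move=> real k [F [FamF [[f fP] _]]]; rewrite ltnNge; apply/negP => kl.
have [c [c_lt c_mono c_prop]] := interval_coloring_monotone fP.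
have [e [[_ forb] sub]] := real (l * (l * (ov F).+1)).
have [cls [cnt edges]] := turan_classes sub.
have c_mono_l : monotone_coloring l c by split=> // v; apply: leq_trans (c_lt v) kl.
apply: (forb F FamF (multipartite_contains _ (leqnSn _) _ edges c_mono_l)) => // j jl.
by rewrite cnt.
Qed.

Theorem proposition8p2 (Fam : ograph -> Prop) :
  chi_interp Fam = emax (chi_lt_family Fam) (Fin 1).
Proof.
rewrite /chi_interp /chi_lt_family -below_inf_sup; congr esucc.
apply: eq_nat_sup => l; split=> -[->|[l_gt0 chi_l]]; [by left| |by left|]; right.
  by split=> //; apply: realizable_above_chi.
by split=> //; apply: realizable_below_chi.
Qed.
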